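(* Let $(R,\mathfrak{m})$ be a Gorenstein local ring, let $q$ be a prime power and $k$ a positive integer. Suppose $\mathfrak{m}^2\neq(0)$, $\mathfrak{m}^3=(0)$, $|R/\mathfrak{m}|=q$, and $\dim_{R/\mathfrak{m}}(\mathfrak{m}/\mathfrak{m}^2)=k>6$. Then $\mathbb{AG}(R)$ contains a subgraph isomorphic to the complete bipartite graph $K_{k-6,3}$.
   Context: All rings are commutative with $1\neq 0$. A Noetherian local ring $(R,\mathfrak{m})$ is called Gorenstein if $\dim_{R/\mathfrak{m}}\operatorname{Ann}(\mathfrak{m})=1$. An ideal $I$ of $R$ is an annihilating-ideal if $IJ=(0)$ for some nonzero ideal $J$ of $R$. The annihilating-ideal graph $\mathbb{AG}(R)$ is the simple graph whose vertices are the nonzero annihilating-ideals of $R$, with distinct vertices $I,J$ adjacent iff $IJ=(0)$. *)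

(* Ideals of a (possibly infinite) commutative ring are
   modelled as Prop-valued subsets R -> Prop, compared extensionally. *)
From HB Require Import structures.
From mathcomp Require Import all_boot all_order all_algebra.
Set Implicit Arguments. Unset Strict Implicit. Unset Printing Implicit Defensive.
Import GRing.Theory.
Local Open Scope ring_scope.

Section Ideals.
Variable R : comNzRingType.

Definition subsetR (I J : R -> Prop) : Prop := forall x, I x -> J x.
Definition seteqR (I J : R -> Prop) : Prop := forall x, I x <-> J x.

Definition is_ideal (I : R -> Prop) : Prop :=
  [/\ I 0, (forall x y, I x -> I y -> I (x + y)) & (forall r x, I x -> I (r * x))].

Definition is_zero_set (I : R -> Prop) : Prop := forall x, I x -> x = 0.
Definition nonzero_set (I : R -> Prop) : Prop := exists x, I x /\ x <> 0.

Definition ideal_mul (I J : R -> Prop) : R -> Prop :=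
  fun x => forall K, is_ideal K -> (forall a b, I a -> J b -> K (a * b)) -> K x.

Definition ann (I : R -> Prop) : R -> Prop := fun x => forall y, I y -> x * y = 0.

Definition gen_ideal (s : seq R) : R -> Prop :=
  fun x => exists c : 'I_(size s) -> R, x = \sum_(i < size s) c i * s`_i.

Definition noetherian : Prop :=
  forall I, is_ideal I -> exists s : seq R, seteqR I (gen_ideal s).

Definition is_maximal (M : R -> Prop) : Prop :=
  [/\ is_ideal M, ~ M 1 &
      forall J, is_ideal J -> subsetR M J -> ~ J 1 -> seteqR J M].

Definition local_with (m : R -> Prop) : Prop :=
  is_maximal m /\ forall M, is_maximal M -> seteqR M m.

(* dim_{R/m} (M/N) = d, for ideals N ⊆ M with m M ⊆ N: there are elements
   x_0..x_{d-1} of M whose classes form an R/m-basis of M/N. *)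
Definition resdim (m M N : R -> Prop) (d : nat) : Prop :=
  exists x : 'I_d -> R,
    [/\ (forall i, M (x i)),
        (forall y, M y -> exists r : 'I_d -> R, N (y - \sum_(i < d) r i * x i)) &
        (forall r : 'I_d -> R, N (\sum_(i < d) r i * x i) -> forall i, m (r i))].

Definition zero_ideal : R -> Prop := fun x => x = 0.

Definition gorenstein (m : R -> Prop) : Prop := resdim m (ann m) zero_ideal 1.

Definition residue_card (m : R -> Prop) (q : nat) : Prop :=
  exists r : 'I_q -> R,
    (forall i j, m (r i - r j) -> i = j) /\ (forall x, exists i, m (x - r i)).

Definition AG_vertex (I : R -> Prop) : Prop :=
  [/\ is_ideal I, nonzero_set I &
      exists J, [/\ is_ideal J, nonzero_set J & is_zero_set (ideal_mul I J)]].

(* AG(R) contains a (not necessarily induced) subgraph isomorphic to K_{a,b}: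
   a + b pairwise distinct vertices, every vertex of the first part adjacent
   to every vertex of the second part. *)
Definition AG_contains_Kab (a b : nat) : Prop :=
  exists (f : 'I_a -> (R -> Prop)) (g : 'I_b -> (R -> Prop)),
    [/\ (forall i, AG_vertex (f i)) /\ (forall j, AG_vertex (g j)),
        (forall i i', seteqR (f i) (f i') -> i = i'),
        (forall j j', seteqR (g j) (g j') -> j = j'),
        (forall i j, ~ seteqR (f i) (g j)) &
        (forall i j, is_zero_set (ideal_mul (f i) (g j)))].

End Ideals.

Definition prime_power (q : nat) : Prop :=
  exists p n : nat, [/\ prime p, (0 < n)%N & q = (p ^ n)%N].

From HB Require Import structures.
From mathcomp Require Import all_boot all_order all_algebra.
From Stdlib Require Import Classical.
Set Implicit Arguments. Unset Strict Implicit. Unset Printing Implicit Defensive.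
Import GRing.Theory.
Local Open Scope ring_scope.

(* Write Ann(m) = Rz.  Since m^3 = 0, every product of two elements of m lies
   in Ann(m) = Rz.  Take b_0, b_1, b_2 and c_1, ..., c_{k-3} in m whose classes
   form a basis of m/m^2.  Each product c_i b is a multiple of z, so one round of
   Gaussian elimination over R/m replaces the c's by k-4 combinations that
   annihilate b and stay independent modulo m^2 + R b_0 + R b_1 + R b_2.  Three
   rounds leave k-6 elements d_i with d_i b_j = 0; the principal ideals (d_i)
   and (b_j) are pairwise distinct vertices of AG(R), all annihilated by (z). *)

Section Ideals.
Variable R : comNzRingType.
Implicit Types (a b r s u y z : R) (I J m W : R -> Prop).

Definition principal_ideal a : R -> Prop := fun x => exists r, x = r * a.

Definition add_span l W (b : 'I_l -> R) : R -> Prop :=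
  fun y => exists s : 'I_l -> R, W (y - \sum_j s j * b j).

Definition free_mod m W n (c : 'I_n -> R) : Prop :=
  forall t : 'I_n -> R, W (\sum_i t i * c i) -> forall i, m (t i).

Lemma ideal0 I : is_ideal I -> I 0.
Proof. by case. Qed.

Lemma idealN I a : is_ideal I -> I a -> I (- a).
Proof. by case=> _ _ IM Ia; rewrite -mulN1r; apply: IM. Qed.

Lemma zero_ideal_is_ideal : is_ideal (@zero_ideal R).
Proof. by split=> // [_ _ -> ->|r _ ->]; rewrite ?addr0 ?mulr0. Qed.

Lemma ideal_mul_mem I J a b : I a -> J b -> ideal_mul I J (a * b).
Proof. by move=> Ia Jb K _; apply. Qed.

Lemma ideal_mul0 I J : ideal_mul I J 0.
Proof. by move=> K /ideal0. Qed.

Lemma maximal_prime m : is_maximal m -> forall s u, m (s * u) -> ~ m u -> m s.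
Proof.
case=> -[m0 mD mM] m1 mmax s u msu mu.
pose J y := exists a t, m a /\ y = a + t * u.
have J_ideal : is_ideal J.
  split; first by exists 0, 0; rewrite mul0r addr0.
  - move=> _ _ [a1 [t1 [ma1 ->]]] [a2 [t2 [ma2 ->]]].
    by exists (a1 + a2), (t1 + t2); rewrite mulrDl addrACA; split=> //; apply: mD.
  - move=> r _ [a [t [ma ->]]].
    by exists (r * a), (r * t); rewrite mulrDr mulrA; split=> //; apply: mM.
have [a [t [ma E]]] : J 1.
  apply: NNPP => J1; apply: mu; apply/(mmax J J_ideal _ J1 u).1.
    by move=> y my; exists y, 0; rewrite mul0r addr0.
  by exists 0, 1; rewrite add0r mul1r.
have -> : s = s * a + t * (s * u) by rewrite mulrCA -mulrDr -E mulr1.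
by apply: mD; apply: mM.
Qed.

Lemma gorenstein_socle m : gorenstein m -> ~ m 1 ->
  exists z, [/\ z <> 0, forall r, m r -> r * z = 0 &
                forall y, ann m y -> exists r, y = r * z].
Proof.
move=> [zs [zs_ann zs_span zs_free]] m1; exists (zs ord0); split.
- move=> z0; apply: m1; apply: (zs_free (fun=> 1) _ ord0).
  by rewrite /zero_ideal big_ord1 mul1r.
- by move=> r mr; rewrite mulrC; apply: zs_ann.
- move=> y /zs_span [r]; rewrite /zero_ideal big_ord1 => /eqP.
  by rewrite subr_eq0 => /eqP ->; exists (r ord0).
Qed.

Lemma cube_zero_sq_ann m a b :
  is_zero_set (ideal_mul (ideal_mul m m) m) -> m a -> m b -> ann m (a * b).
Proof.
by move=> m3 ma mb y my; apply: m3; apply: ideal_mul_mem => //; apply: ideal_mul_mem.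
Qed.

Lemma add_span0 l W (b : 'I_l -> R) : W 0 -> add_span W b 0.
Proof. by exists (fun=> 0); rewrite big1 ?subr0 // => j _; rewrite mul0r. Qed.

Lemma add_span_mul l W (b : 'I_l -> R) r j : W 0 -> add_span W b (r * b j).
Proof.
exists (fun i => if i == j then r else 0).
by rewrite (bigD1 j) //= eqxx big1 ?addr0 ?subrr // => i /negbTE ->; rewrite mul0r.
Qed.

Lemma free_mod_lshift m W l n (x : 'I_(l + n) -> R) :
  free_mod m W x -> free_mod m W (x \o lshift n).
Proof.
move=> x_free t Wt j.
have := x_free (fun i => if split i is inl j then t j else 0) _ (lshift n j).
rewrite (unsplitK (inl _ j)); apply; rewrite big_split_ord /=.
rewrite [X in _ + X]big1 ?addr0 => [|i _]; last by rewrite (unsplitK (inr _ i)) mul0r.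
by under eq_bigr => i _ do rewrite (unsplitK (inl _ i)).
Qed.

Lemma free_mod_rshift m W l n (x : 'I_(l + n) -> R) :
  free_mod m W x -> free_mod m (add_span W (x \o lshift n)) (x \o @rshift l n).
Proof.
move=> x_free t [s Ws] i.
have := x_free (fun i => match split i with inl j => - s j | inr i => t i end) _
  (rshift l i).
rewrite (unsplitK (inr _ i)); apply; rewrite big_split_ord /=.
under eq_bigr => j _ do rewrite (unsplitK (inl _ j)) mulNr.
under [X in _ + X]eq_bigr => j _ do rewrite (unsplitK (inr _ j)).
by rewrite sumrN addrC.
Qed.

Section FreeModulo.
Variable m : R -> Prop.
Hypothesis m_proper : ~ m 1.

Lemma free_mod_notin W n (c : 'I_n -> R) i : free_mod m W c -> ~ W (c i).
Proof.
move=> c_free Wc; apply: m_proper.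
have := c_free (fun j => if j == i then 1 else 0) _ i; rewrite eqxx; apply.
by rewrite (bigD1 i) //= eqxx mul1r big1 ?addr0 // => j /negbTE ->; rewrite mul0r.
Qed.

Lemma free_mod_notin_sub W n (c : 'I_n -> R) i j r :
  free_mod m W c -> i != j -> ~ W (c i - r * c j).
Proof.
move=> c_free ij Wc; apply: m_proper.
have := c_free (fun l => if l == i then 1 else if l == j then - r else 0) _ i.
rewrite eqxx; apply; have ji : (j == i) = false by rewrite eq_sym (negbTE ij).
rewrite (bigD1 i) //= eqxx mul1r (bigD1 j) /=; last by rewrite ji.
rewrite ji eqxx big1 ?addr0 ?mulNr // => l /andP [/negbTE -> /negbTE ->].
by rewrite mul0r.
Qed.

Hypothesis m_ideal : is_ideal m.
Hypothesis m_prime : forall s u, m (s * u) -> ~ m u -> m s.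

Definition eliminate n (c : 'I_n.+1 -> R) (p : 'I_n.+1) u (rho : 'I_n.+1 -> R) :
  'I_n -> R :=
  fun i => u * c (lift p i) - rho (lift p i) * c p.

Lemma free_mod_eliminate W n (c : 'I_n.+1 -> R) p u rho :
  ~ m u -> free_mod m W c -> free_mod m W (eliminate c p u rho).
Proof.
move=> mu c_free t Wt i; apply: (m_prime _ mu).
pose t' j := if unlift p j is Some i then t i * u else - \sum_i t i * rho (lift p i).
have := c_free t' _ (lift p i); rewrite /t' liftK; apply.
rewrite (bigD1_ord p) //= unlift_none.
under [X in _ + X]eq_bigr => j _ do rewrite liftK.
suff -> : \sum_j t j * u * c (lift p j) =
    \sum_j t j * eliminate c p u rho j + \sum_j t j * rho (lift p j) * c p.
  by rewrite -mulr_suml mulNr addrCA addNr addr0.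
rewrite -big_split /=; apply: eq_bigr => j _.
by rewrite /eliminate mulrBr !mulrA subrK.
Qed.

Lemma eliminate_mem n (c : 'I_n.+1 -> R) p u rho :
  (forall i, m (c i)) -> forall i, m (eliminate c p u rho i).
Proof.
case: m_ideal => _ mD mM mc i.
by apply: mD; [|apply: idealN m_ideal _]; apply: mM.
Qed.

Lemma eliminate_ann n (c : 'I_n.+1 -> R) p u rho b :
  (forall i, u * (c i * b) = rho i * (c p * b)) ->
  forall i, eliminate c p u rho i * b = 0.
Proof. by move=> E i; rewrite /eliminate mulrBl -!mulrA E subrr. Qed.

Lemma eliminate_ann_stable n (c : 'I_n.+1 -> R) p u rho b :
  (forall i, c i * b = 0) -> forall i, eliminate c p u rho i * b = 0.
Proof. by move=> E i; rewrite /eliminate mulrBl -!mulrA !E !mulr0 subrr. Qed.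

Variable z : R.
Hypothesis m_ann_z : forall r, m r -> r * z = 0.
Hypothesis m_sq_z : forall a b, m a -> m b -> exists r, a * b = r * z.

Lemma eliminate_one W n (c : 'I_n.+1 -> R) b :
  m b -> free_mod m W c -> (forall i, m (c i)) ->
  exists d : 'I_n -> R, [/\ free_mod m W d, (forall i, m (d i)),
    (forall i, d i * b = 0) &
    (forall b', (forall i, c i * b' = 0) -> forall i, d i * b' = 0)].
Proof.
move=> mb c_free mc; have [r cb] := fin_all_exists (fun i => m_sq_z (mc i) mb).
have [p [u [rho [mu E]]]] : exists p u rho,
    ~ m u /\ forall i, u * (c i * b) = rho i * (c p * b).
  (* If no r_i is a unit then every c_i b = r_i z is already 0. *)
  have [[p mrp]|mr] := classic (exists p, ~ m (r p)).
    by exists p, (r p), r; split=> // i; rewrite !cb mulrCA.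
  exists ord0, 1, (fun=> 0); split=> //.
  move=> i; rewrite cb m_ann_z ?mulr0 ?mul0r //.
  by apply: NNPP => mri; apply: mr; exists i.
exists (eliminate c p u rho); split.
- exact: free_mod_eliminate.
- exact: eliminate_mem.
- exact: eliminate_ann.
- by move=> b'; apply: eliminate_ann_stable.
Qed.

Lemma eliminate_family W l n (c : 'I_(l + n) -> R) (b : 'I_l -> R) :
  (forall j, m (b j)) -> free_mod m W c -> (forall i, m (c i)) ->
  exists d : 'I_n -> R, [/\ free_mod m W d, (forall i, m (d i)),
    (forall i j, d i * b j = 0) &
    (forall b', (forall i, c i * b' = 0) -> forall i, d i * b' = 0)].
Proof.
elim: l c b => [|l IHl] c b mb c_free mc.
  by exists c; split=> // i [].
have [c1 [c1_free mc1 c1b0 c1_stable]] := eliminate_one (mb ord0) c_free mc.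
have [d [d_free md db d_stable]] := IHl c1 (b \o lift ord0) (fun j => mb _) c1_free mc1.
exists d; split=> // [i j|b' cb']; last by apply/d_stable/c1_stable.
by case: (unliftP ord0 j) => [j' ->|->]; [apply: db | apply/d_stable/c1b0].
Qed.

End FreeModulo.

Lemma principal_ideal_is_ideal a : is_ideal (principal_ideal a).
Proof.
split; first by exists 0; rewrite mul0r.
- by move=> _ _ [r ->] [s ->]; exists (r + s); rewrite mulrDl.
- by move=> r _ [s ->]; exists (r * s); rewrite mulrA.
Qed.

Lemma principal_ideal_self a : principal_ideal a a.
Proof. by exists 1; rewrite mul1r. Qed.

Lemma principal_ideal_eq a b :
  seteqR (principal_ideal a) (principal_ideal b) -> exists r, a = r * b.
Proof. by move=> E; apply/(E a).1/principal_ideal_self. Qed.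

Lemma principal_ideal_mul0 a b :
  a * b = 0 -> is_zero_set (ideal_mul (principal_ideal a) (principal_ideal b)).
Proof.
move=> ab x /(_ _ (zero_ideal_is_ideal)); apply=> _ _ [r ->] [s ->].
by rewrite /zero_ideal mulrCA -!mulrA ab !mulr0.
Qed.

Lemma AG_vertex_principal a z :
  a <> 0 -> z <> 0 -> a * z = 0 -> AG_vertex (principal_ideal a).
Proof.
move=> a0 z0 az; split; first exact: principal_ideal_is_ideal.
  by exists a; split=> //; apply: principal_ideal_self.
exists (principal_ideal z); split; first exact: principal_ideal_is_ideal.
  by exists z; split=> //; apply: principal_ideal_self.
exact: principal_ideal_mul0.
Qed.

End Ideals.

Theorem lemma2p8 (R : comNzRingType) (m : R -> Prop) (q k : nat) :
  noetherian R -> local_with m -> gorenstein m ->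
  prime_power q ->
  ~ is_zero_set (ideal_mul m m) ->
  is_zero_set (ideal_mul (ideal_mul m m) m) ->
  residue_card m q ->
  resdim m m (ideal_mul m m) k ->
  (6 < k)%N ->
  AG_contains_Kab R (k - 6) 3.
Proof.
move=> _ [m_max _] m_gor _ _ m3 _ + k_gt6.
have [n ->] : exists n, k = (3 + (3 + n))%N.
  by exists (k - 6)%N; rewrite addnA subnKC // ltnW.
have -> : (3 + (3 + n) - 6 = n)%N by rewrite addnA addKn.
move=> -[x [mx _ x_free]].
have [m_ideal m_proper _] := m_max.
have [z [z0 m_ann_z ann_z]] := gorenstein_socle m_gor m_proper.
have m_sq_z a b : m a -> m b -> exists r, a * b = r * z.
  by move=> ma mb; apply/ann_z/cube_zero_sq_ann.
pose b := x \o lshift (3 + n).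
have b_free : free_mod m (ideal_mul m m) b := free_mod_lshift x_free.
have [d [d_free md db _]] := eliminate_family m_proper m_ideal
  (maximal_prime m_max) m_ann_z m_sq_z (b := b)
  (fun j => mx _) (free_mod_rshift x_free) (fun i => mx _).
exists (fun i => principal_ideal (d i)), (fun j => principal_ideal (b j)); split.
- split=> [i|j]; apply: (AG_vertex_principal _ z0).
  + move=> di0; apply: (free_mod_notin m_proper (i := i) d_free).
    by rewrite di0; apply: add_span0; apply: ideal_mul0.
  + exact/m_ann_z/md.
  + move=> bj0; apply: (free_mod_notin m_proper (i := j) b_free).
    by rewrite bj0; apply: ideal_mul0.
  + exact/m_ann_z/mx.
- move=> i i' /principal_ideal_eq [r E]; case: (eqVneq i i') => // ii'.
  case: (free_mod_notin_sub (r := r) m_proper d_free ii').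
  by rewrite E subrr; apply: add_span0; apply: ideal_mul0.
- move=> j j' /principal_ideal_eq [r E]; case: (eqVneq j j') => // jj'.
  case: (free_mod_notin_sub (r := r) m_proper b_free jj').
  by rewrite E subrr; apply: ideal_mul0.
- move=> i j /principal_ideal_eq [r E].
  apply: (free_mod_notin m_proper (i := i) d_free).
  by rewrite E; apply: add_span_mul; apply: ideal_mul0.
- by move=> i j; apply: principal_ideal_mul0.
Qed.
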